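(* Let $q$ be a prime power, $m\ge 1$, and let $\mathcal{C}$ be an $[n,k]$ linear code over $\mathbb{F}_{q^m}$. The generalized subfield subcodes of $\mathcal{C}$ (over all choices of the basis $\mathcal{B}$, of $u\in\{1,\dots,m\}^n$, of $f\in GL_q(m)^n$ and of the block permutation $\pi$) are exactly the codes $\mathcal{C}P\cap\mathbb{F}_q^n$, where $P$ ranges over all $n\times n$ monomial matrices over $\mathbb{F}_{q^m}$ (i.e. exactly the subfield subcodes over $\mathbb{F}_q$ of the codes equivalent to $\mathcal{C}$ under $\mathbb{F}_{q^m}$-linear Hamming isometries).
   Context: A monomial matrix is a square matrix with exactly one nonzero entry in each row and each column; $\mathcal{C}P=\{cP: c\in\mathcal{C}\}$. For a basis $\mathcal{B}=(b_1,\dots,b_m)$ of $\mathbb{F}_{q^m}$ over $\mathbb{F}_q$, let $\phi_{\mathcal{B}}:\mathbb{F}_{q^m}\to\mathbb{F}_q^m$ send $\sum_i x_ib_i$ to $(x_1,\dots,x_m)$, and $\Phi_{\mathcal{B}}(c_1,\dots,c_n)=(\phi_{\mathcal{B}}(c_1)|\cdots|\phi_{\mathcal{B}}(c_n))\in(\mathbb{F}_q^m)^n=\mathbb{F}_q^{nm}$; the $q$-ary image is $Im_q(\mathcal{C})=\Phi_{\mathcal{B}}(\mathcal{C})$. $GL_q(m)$ is the group of $\mathbb{F}_q$-linear automorphisms of $\mathbb{F}_q^m$. For $f=(f_1,\dots,f_n)\in GL_q(m)^n$ and a permutation $\pi$ of $\{1,\dots,n\}$, $mon=\pi\circ f$ acts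 on $(x_1|\cdots|x_n)\in(\mathbb{F}_q^m)^n$ by replacing each block $x_i$ by $f_i(x_i)$ and then permuting the $n$ blocks according to $\pi$. For $u=(u_1,\dots,u_n)\in\{1,\dots,m\}^n$ and an $\mathbb{F}_q$-linear code $D\subseteq(\mathbb{F}_q^m)^n$, writing $x_{j,l}$ for the $l$-th coordinate of the $j$-th block of $x$, let $S_u(D)=\{(x_{1,u_1},\dots,x_{n,u_n}) : x\in D,\ x_{j,l}=0 \text{ for all } j \text{ and all } l\neq u_j\}\subseteq\mathbb{F}_q^n$ (shortening on all positions other than the $u_j$-th of each block). The generalized subfield subcode of $\mathcal{C}$ relative to $\mathcal{B},u,mon$ is $GSS(\mathcal{C})=S_u(mon(Im_q(\mathcal{C})))$. *)

From HB Require Import structures.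
From mathcomp Require Import all_boot all_order all_algebra all_fingroup all_field.
Set Implicit Arguments. Unset Strict Implicit. Unset Printing Implicit Defensive.
Import GRing.Theory.
Local Open Scope ring_scope.

Definition monomial_mx (K : fieldType) (n : nat) (P : 'M[K]_n) : bool :=
  [forall i, #|[set j | P i j != 0]| == 1%N] &&
  [forall j, #|[set i | P i j != 0]| == 1%N].

(* q-ary image Phi_B(c): row j of the n x m matrix is phi_B(c_j), i.e. the
   coordinates of c_j in the F-basis B of L. Entry (j,l) is x_{j,l}. *)
Definition qimage (F : finFieldType) (L : fieldExtType F) (m : nat)
  (B : m.-tuple L) (n : nat) (c : 'rV[L]_n) : 'M[F]_(n, m) :=
  \matrix_(j, l) coord B l (c ord0 j).

(* mon = pi o f with f = (f_1,...,f_n) in GL_q(m)^n, f_i(v) = v *m A i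
   (A i invertible); block i is replaced by f_i(x_i) and moved to position
   pi i, i.e. new block j is f_{pi^-1 j}(x_{pi^-1 j}). *)
Definition mon_act (F : fieldType) (n m : nat) (pi : 'S_n)
  (A : 'I_n -> 'M[F]_m) (x : 'M[F]_(n, m)) : 'M[F]_(n, m) :=
  \matrix_(j, l) (row ((pi^-1)%g j) x *m A ((pi^-1)%g j)) ord0 l.

Definition GSS (F : finFieldType) (L : fieldExtType F) (n : nat)
  (C : {vspace 'rV[L]_n}) (m : nat) (B : m.-tuple L) (u : 'I_n -> 'I_m)
  (pi : 'S_n) (A : 'I_n -> 'M[F]_m) : 'rV[F]_n -> Prop :=
  fun y => exists c : 'rV[L]_n, c \in C /\
    let x := mon_act pi A (qimage B c) in
    (forall (j : 'I_n) (l : 'I_m), l != u j -> x j l = 0) /\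
    y = \row_j x j (u j).

Definition SSC (F : finFieldType) (L : fieldExtType F) (n : nat)
  (C : {vspace 'rV[L]_n}) (P : 'M[L]_n) : 'rV[F]_n -> Prop :=
  fun y => exists c : 'rV[L]_n, c \in C /\ c *m P = map_mx (in_alg L) y.

From HB Require Import structures.
From mathcomp Require Import all_boot all_order all_algebra all_fingroup all_field.
Import GRing.Theory passmx.
Local Open Scope ring_scope.

(* For invertible A_i, the block phi_B(c_i) A_i is supported on the single
   coordinate u_(pi i) exactly when c_i lies on the F-line through
   b_i := phi_B^-1(e_(u_(pi i)) A_i^-1), and the surviving coordinate is then
   the scalar y with c_i = y b_i.  So GSS(C) is the set of y in F^n such that
   c_i = y_(pi i) b_i for some c in C, which is the subfield subcode of C P for
   the monomial matrix P = diag(b_i^-1) perm(pi).  Conversely a monomial matrix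
   is diag(d) perm(pi) with all d_i <> 0, and it is obtained from a constant u
   and any A_i sending phi_B(d_i^-1) to a fixed unit vector; such A_i exist
   because GL_m(F) acts transitively on nonzero vectors. *)

Lemma forall_perm {n} (s : 'S_n) {P : 'I_n -> Prop} :
  (forall j, P j) <-> (forall i, P (s i)).
Proof. by split=> P_s j //; rewrite -(permKV s j). Qed.

Section RowReduction.
Variable F : fieldType.

Lemma delta_mx_neq0 {m n} (i : 'I_m) (j : 'I_n) : delta_mx i j != 0 :> 'M[F]_(m, n).
Proof. by apply/eqP => /matrixP/(_ i j); rewrite !mxE !eqxx; apply/eqP/oner_neq0. Qed.

Lemma rV_neq0_pidE n (v : 'rV[F]_n) :
  v != 0 -> exists2 R, R \in unitmx & v = pid_mx 1 *m R.
Proof.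
move=> v_nz; have := mulmx_ebase v; rewrite rank_rV v_nz.
have a_unit : col_ebase v 0 0 \is a GRing.unit.
  by have := col_ebase_unit v; rewrite unitmxE det_mx11.
rewrite [col_ebase v]mx11_scalar mul_scalar_mx -scalemxAl scalemxAr => <-.
by exists (col_ebase v 0 0 *: row_ebase v); rewrite // unitmxZ ?row_ebase_unit.
Qed.

Lemma unitmx_row_transitive n (v w : 'rV[F]_n) : v != 0 -> w != 0 ->
  exists2 A, A \in unitmx & v *m A = w.
Proof.
move=> /rV_neq0_pidE[Rv Rv_unit ->] /rV_neq0_pidE[Rw Rw_unit ->].
by exists (invmx Rv *m Rw); rewrite ?unitmx_mul ?unitmx_inv ?Rv_unit // mulmxA mulmxK.
Qed.

End RowReduction.

Section MonomialMatrices.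
Variable K : fieldType.

Lemma diag_perm_mxE n (d : 'rV[K]_n) (s : 'S_n) i j :
  (diag_mx d *m perm_mx s) i j = if s i == j then d 0 i else 0.
Proof. by rewrite mul_diag_mx !mxE mulr_natr mulrb. Qed.

Lemma mulmx_diag_perm_mx m n (A : 'M[K]_(m, n)) (d : 'rV[K]_n) (s : 'S_n) k i :
  (A *m (diag_mx d *m perm_mx s)) k (s i) = A k i * d 0 i.
Proof.
by rewrite mulmxA -[s in perm_mx s]invgK -col_permE mxE permK mul_mx_diag mxE.
Qed.

Lemma monomial_mxP n (P : 'M[K]_n) :
  reflect (exists (s : 'S_n) (d : 'rV[K]_n),
             (forall i, d 0 i != 0) /\ P = diag_mx d *m perm_mx s)
          (monomial_mx P).
Proof.
apply: (iffP andP) => [[/forallP P_row /forallP P_col] | [s [d [d_nz ->]]]].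
  have /fin_all_exists[s P_s] i : exists j, [set j | P i j != 0] = [set j].
    by have /cards1P[j ->] := P_row i; exists j.
  have P_nz i j : (P i j != 0) = (j == s i).
    by have /setP/(_ j) := P_s i; rewrite !inE.
  have s_inj : injective s.
    move=> i1 i2 s12; have /cards1P[i0 col_i0] := P_col (s i1).
    have: i1 \in [set i0] by rewrite -col_i0 inE P_nz.
    have: i2 \in [set i0] by rewrite -col_i0 inE P_nz s12.
    by rewrite !inE => /eqP-> /eqP->.
  exists (perm s_inj), (\row_i P i (s i)); split=> [i | ].
    by rewrite mxE P_nz.
  apply/matrixP => i j; rewrite diag_perm_mxE mxE permE eq_sym.
  have [-> // | s_ij] := eqVneq j (s i).
  by move: (P_nz i j); rewrite (negbTE s_ij) => /negbFE/eqP.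
split; apply/forallP => i.
  apply/cards1P; exists (s i); apply/setP => j.
  by rewrite !inE diag_perm_mxE (eq_sym (s i)); case: (j == s i); rewrite ?d_nz ?eqxx.
apply/cards1P; exists ((s^-1)%g i); apply/setP => j.
by rewrite !inE diag_perm_mxE (canF_eq (permK s)); case: (j == _); rewrite ?d_nz ?eqxx.
Qed.
End MonomialMatrices.

Lemma row_mon_act (F : fieldType) n m (pi : 'S_n) (A : 'I_n -> 'M[F]_m) x i :
  row (pi i) (mon_act pi A x) = row i x *m A i.
Proof. by apply/rowP => l; rewrite !mxE permK. Qed.

Lemma shortenP (R : nzRingType) n m (x : 'M[R]_(n, m)) (u : 'I_n -> 'I_m) y :
  (forall j l, l != u j -> x j l = 0) /\ y = \row_j x j (u j) <->
  (forall j, row j x = y 0 j *: delta_mx 0 (u j)).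
Proof.
split=> [[x_u ->] j | x_u].
  apply/rowP => l; rewrite !mxE eqxx /=.
  by have [-> | /x_u->] := eqVneq l (u j); rewrite ?mulr1 ?mulr0.
have x_jl j l : x j l = y 0 j * (l == u j)%:R.
  by have /rowP/(_ l) := x_u j; rewrite !mxE eqxx.
split=> [j l /negbTE l_u | ]; first by rewrite x_jl l_u mulr0.
by apply/rowP => j; rewrite mxE x_jl eqxx mulr1.
Qed.

Lemma SSC_diag_perm_mxP (F : finFieldType) (L : fieldExtType F) n
    (C : {vspace 'rV[L]_n}) (pi : 'S_n) (b : 'I_n -> L) y :
  (forall i, b i != 0) ->
  SSC C (diag_mx (\row_i (b i)^-1) *m perm_mx pi) y <->
  exists2 c, c \in C & forall i, c 0 i = y 0 (pi i) *: b i.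
Proof.
move=> b_nz.
have coordsP c : c *m (diag_mx (\row_i (b i)^-1) *m perm_mx pi) = map_mx (in_alg L) y
    <-> forall i, c 0 i = y 0 (pi i) *: b i.
  split=> [/rowP/(forall_perm pi) c_y i | c_y]; last apply/rowP/(forall_perm pi) => i.
    have := c_y i; rewrite mulmx_diag_perm_mx !mxE -mulr_algl.
    exact: canRL (divfK (b_nz i)).
  by rewrite mulmx_diag_perm_mx !mxE c_y -mulr_algl mulfK.
by split=> [[c [cC /coordsP]] | [c cC /coordsP]]; exists c.
Qed.

Section Coordinates.
Context {F : finFieldType} {L : fieldExtType F}.
Local Notation m := (\dim {:L}).
Variable B : m.-tuple L.
Hypothesis B_basis : basis_of fullv B.

Lemma row_qimage n (c : 'rV[L]_n) i : row i (qimage B c) = rVof B (c 0 i).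
Proof. by apply/rowP => l; rewrite !mxE. Qed.

Lemma rVof_mulmx_delta {A : 'M[F]_m} {b l} c t :
  A \in unitmx -> rVof B b *m A = delta_mx 0 l ->
  rVof B c *m A = t *: delta_mx 0 l <-> c = t *: b.
Proof.
move=> A_unit b_A; rewrite -b_A scalemxAl -linearZ.
by split=> [/(can_inj (mulmxK A_unit))/(can_inj (rVofK B_basis)) | ->].
Qed.

Lemma rVof_mulmx_delta_neq0 {A : 'M[F]_m} {b l} :
  rVof B b *m A = delta_mx 0 l -> b != 0.
Proof.
move=> b_A; apply: contraTneq (delta_mx_neq0 F (0 : 'I_1) l) => b0.
by rewrite negbK -b_A b0 linear0 mul0mx.
Qed.

Lemma GSS_coordsP {n} (C : {vspace 'rV[L]_n}) {u : 'I_n -> 'I_m} {s : 'S_n}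
    {A : 'I_n -> 'M[F]_m} {b : 'I_n -> L} y :
  (forall i, A i \in unitmx) ->
  (forall i, rVof B (b i) *m A i = delta_mx 0 (u (s i))) ->
  GSS C B u s A y <-> exists2 c, c \in C & forall i, c 0 i = y 0 (s i) *: b i.
Proof.
move=> A_unit b_A.
have coordsP c : (let x := mon_act s A (qimage B c) in
      (forall j l, l != u j -> x j l = 0) /\ y = \row_j x j (u j))
    <-> forall i, c 0 i = y 0 (s i) *: b i.
  have rowE i : row (s i) (mon_act s A (qimage B c)) = rVof B (c 0 i) *m A i.
    by rewrite row_mon_act row_qimage.
  split=> [/shortenP/(forall_perm s) c_y i | c_y].
    by apply/(rVof_mulmx_delta _ _ (A_unit i) (b_A i)); rewrite -rowE c_y.
  apply/shortenP/(forall_perm s) => i.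
  by rewrite rowE; apply/(rVof_mulmx_delta _ _ (A_unit i) (b_A i)).
by split=> [[c [cC /coordsP]] | [c cC /coordsP]]; exists c.
Qed.

Lemma GSS_eq_SSC {n} (C : {vspace 'rV[L]_n}) {u : 'I_n -> 'I_m} {s : 'S_n}
    {A : 'I_n -> 'M[F]_m} {b : 'I_n -> L} y :
  (forall i, A i \in unitmx) ->
  (forall i, rVof B (b i) *m A i = delta_mx 0 (u (s i))) ->
  GSS C B u s A y <-> SSC C (diag_mx (\row_i (b i)^-1) *m perm_mx s) y.
Proof.
move=> A_unit b_A; apply: (iff_trans (GSS_coordsP _ _ A_unit b_A)).
by apply: iff_sym; apply: SSC_diag_perm_mxP => i; apply: rVof_mulmx_delta_neq0 (b_A i).
Qed.

End Coordinates.

Theorem theorem4 (F : finFieldType) (L : fieldExtType F) (m : nat)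
  (hm : \dim (fullv : {vspace L}) = m) (n k : nat)
  (C : {vspace 'rV[L]_n}) (hk : \dim C = k) :
  (forall (B : m.-tuple L) (u : 'I_n -> 'I_m) (A : 'I_n -> 'M[F]_m)
          (pi : 'S_n),
     basis_of fullv B -> (forall i, A i \in unitmx) ->
     exists P : 'M[L]_n, monomial_mx P /\
       (forall y, GSS C B u pi A y <-> SSC C P y)) /\
  (forall P : 'M[L]_n, monomial_mx P ->
     exists (B : m.-tuple L) (u : 'I_n -> 'I_m) (A : 'I_n -> 'M[F]_m)
            (pi : 'S_n),
       basis_of fullv B /\ (forall i, A i \in unitmx) /\
       (forall y, GSS C B u pi A y <-> SSC C P y)).
Proof.
subst m; split=> [B u A pi B_basis A_unit | P /monomial_mxP[pi [d [d_nz ->]]]].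
  have /fin_all_exists[b b_A] i : exists b, rVof B b *m A i = delta_mx 0 (u (pi i)).
    by exists (vecof B (delta_mx 0 (u (pi i)) *m invmx (A i))); rewrite vecofK ?mulmxKV.
  exists (diag_mx (\row_i (b i)^-1) *m perm_mx pi).
  split=> [|y]; last exact: GSS_eq_SSC.
  apply/monomial_mxP; exists pi, (\row_i (b i)^-1); split=> // i.
  by rewrite mxE invr_eq0 (rVof_mulmx_delta_neq0 B (b_A i)).
pose B := vbasis {:L}; have B_basis : basis_of fullv B := vbasisP fullv.
pose l0 : 'I_(\dim {:L}) := Ordinal (adim_gt0 _).
have /fin_all_exists2[A A_unit b_A] i :
    exists2 A, A \in unitmx & rVof B (d 0 i)^-1 *m A = delta_mx 0 l0.
  by apply: unitmx_row_transitive; rewrite ?delta_mx_neq0 ?rVof_eq0 ?invr_eq0.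
exists B, (fun _ => l0), A, pi; split=> //; split=> // y.
have -> : d = \row_i ((d 0 i)^-1)^-1 by apply/rowP => i; rewrite mxE invrK.
exact: GSS_eq_SSC.
Qed.
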